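(* In the RSP setting described in the context, let $b\in\mathbb{N}^+$ with $b\le n$, and let $i^*$ be the smallest integer $i\ge0$ with $C_{\mathrm{opt}}(G^-_{S_i})>b$. Then $i^*\le\lceil\log_2 n\rceil$.
   Context: RSP setting: $G=(V,E,c,r)$ is a weakly connected directed graph with $n=|V|$, $m=|E|$, $c,r:E\to\mathbb{R}_{\ge0}$, vertices $s\ne t$, bound $R\ge 0$. Paths are edge sets; $P_v$ = set of paths from $s$ to $v$; $C_G(p)=\sum_{e\in p}c(e)$, $R_G(p)=\sum_{e\in p}r(e)$; $C_{\mathrm{opt}}(G)=\min\{C_G(p):p\in P_t,\ R_G(p)\le R\}$. It is assumed that a path $p\in P_t$ with $R_G(p)\le R$ exists and that $C_{\mathrm{opt}}(G)>0$. For $S>0$, $G^-_S=(V,E,c^-_S,r)$ with $c^-_S(e)=\lfloor c(e)/S\rfloor$ (same $s,t,R$). Bounds $L,U$: sort the edges $e_1,\dots,e_m$ ascending by cost; let $j^*$ be the smallest $j$ such that some $p\in P_t$ with $R_G(p)\le R$ uses only edges from $\{e_1,\dots,e_j\}$; set $L=c(e_{j^*})$ and $U=nL$ (so $L\le C_{\mathrm{opt}}(G)\le U$). Scaling factors: $S_i=2^{-i}U/(2n)$ for $i\in\mathbb{N}_0$. *)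

From HB Require Import structures.
From mathcomp Require Import all_boot all_order all_algebra.
From mathcomp Require Import boolp reals.
Set Implicit Arguments. Unset Strict Implicit. Unset Printing Implicit Defensive.
Import Order.TTheory GRing.Theory Num.Theory.
Local Open Scope ring_scope.

Definition weakly_connected (V : finType) (E : {set V * V}) : Prop :=
  forall x y : V, connect (fun u w => ((u, w) \in E) || ((w, u) \in E)) x y.

Definition edge_path (V : finType) (E : {set V * V}) (s v : V) (p : {set V * V})
  : Prop :=
  exists vs : seq V,
    [/\ uniq (s :: vs), last s vs = v,
        all (fun e => e \in E) (zip (s :: vs) vs)
      & p = [set e | e \in zip (s :: vs) vs]].

Definition pcost (V : finType) (K : numDomainType) (c : V * V -> K)
  (p : {set V * V}) : K := \sum_(e in p) c e.

Definition feasible (V : finType) (K : numDomainType) (E : {set V * V})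
  (r : V * V -> K) (s t : V) (Rb : K) (p : {set V * V}) : Prop :=
  edge_path E s t p /\ pcost r p <= Rb.

(* C_opt(G) = min { C_G(p) : p feasible }  (0 if no feasible path exists,
   a case excluded by the standing assumptions). *)
Definition Copt (V : finType) (K : realType) (E : {set V * V})
  (c r : V * V -> K) (s t : V) (Rb : K) : K :=
  match [pick p : {set V * V} | `[< feasible E r s t Rb p >]] with
  | Some p0 => \big[Num.min/ pcost c p0]_(p : {set V * V} | `[< feasible E r s t Rb p >])
                 pcost c p
  | None => 0
  end.

Definition scaled_cost (V : finType) (K : realType) (c : V * V -> K) (S : K)
  : V * V -> K := fun e => (Num.floor (c e / S))%:~R.

(* At the scale S_k with k = ceil(log2 n) we have S_k <= L / (2n), and by the
   minimality of j* every feasible path contains an edge of cost at least L =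
   c(e_{j*}) > 0. After scaling, that single edge already costs
   floor(L / S_k) >= 2n > b, and all other scaled costs are nonnegative,
   so C_opt(G^-_{S_k}) > b; hence the least such index is at most k. *)

From HB Require Import structures.
From mathcomp Require Import all_boot all_order all_algebra.
From mathcomp Require Import boolp reals.
From mathcomp Require Import ring.
Set Implicit Arguments. Unset Strict Implicit. Unset Printing Implicit Defensive.
Import Order.TTheory GRing.Theory Num.Theory.
Local Open Scope ring_scope.

Lemma edge_path_sub (V : finType) (E : {set V * V}) (s v : V) p :
  edge_path E s v p -> p \subset E.
Proof.
by case=> vs [_ _ /allP in_E ->]; apply/subsetP => e; rewrite inE => /in_E.
Qed.

Lemma edge_path_neq0 (V : finType) (E : {set V * V}) (s v : V) p :
  s != v -> edge_path E s v p -> p != set0.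
Proof.
move=> neq_sv [[|w vs] [_ /= last_vs _ ->]]; first by rewrite last_vs eqxx in neq_sv.
by apply/set0Pn; exists (s, w); rewrite inE /= mem_head.
Qed.

Lemma Copt_le_pcost (K : realType) (V : finType) (E : {set V * V})
  (c r : V * V -> K) (s t : V) (Rb : K) p :
  feasible E r s t Rb p -> Copt E c r s t Rb <= pcost c p.
Proof.
move=> Fp; rewrite /Copt; case: pickP => [p0 _|none].
  by apply: bigmin_le_cond; apply/asboolP.
by move: (none p); rewrite (asboolT Fp).
Qed.

Lemma lt_Copt (K : realType) (V : finType) (E : {set V * V})
  (c r : V * V -> K) (s t : V) (Rb : K) (x : K) :
  (exists p, feasible E r s t Rb p) ->
  (forall p, feasible E r s t Rb p -> x < pcost c p) ->
  x < Copt E c r s t Rb.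
Proof.
move=> [q Fq] lt_x; rewrite /Copt; case: pickP => [p0 Fp0|none].
  apply: lt_bigmin; first by apply: lt_x; apply/asboolP.
  by move=> p /asboolP; apply: lt_x.
by move: (none q); rewrite (asboolT Fq).
Qed.

Section SortedNth.
Variables (T : eqType) (leT : rel T) (x0 : T) (es : seq T) (j : nat).
Hypotheses (leT_tr : transitive leT) (leT_refl : reflexive leT).
Hypotheses (sorted_es : sorted leT es) (j_lt : (j < size es)%N).

Lemma sorted_le_nth_take x : x \in take j.+1 es -> leT x (nth x0 es j).
Proof.
move=> x_take; have x_es : x \in es := mem_take x_take.
rewrite -{1}(nth_index x0 x_es).
by apply: sorted_leq_nth; rewrite ?inE ?index_mem // -ltnS index_ltn.
Qed.

Lemma sorted_nth_le_notin_take x :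
  x \in es -> x \notin take j es -> leT (nth x0 es j) x.
Proof.
move=> x_es; rewrite in_take // -leqNgt => j_le.
rewrite -[x in leT _ x](nth_index x0 x_es).
by apply: sorted_leq_nth; rewrite ?inE ?index_mem.
Qed.

End SortedNth.

Lemma lt_pcost_scaled (K : realType) (V : finType) (c : V * V -> K) (S : K)
  (p : {set V * V}) e (b : nat) :
  0 < S -> {in p, forall f, 0 <= c f} -> e \in p -> b.+1%:R * S <= c e ->
  b%:R < pcost (scaled_cost c S) p.
Proof.
move=> S_gt0 c_ge0 e_p le_ce; rewrite /pcost (bigD1 e) //=.
have rest_ge0 : 0 <= \sum_(f in p | f != e) scaled_cost c S f.
  apply: sumr_ge0 => f /andP[f_p _].
  by rewrite /scaled_cost ler0z floor_ge0 divr_ge0 ?c_ge0 // ltW.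
have b_lt_e : b%:R < scaled_cost c S e.
  have : (b.+1%:Z <= Num.floor (c e / S))%R by rewrite floor_ge_int ler_pdivlMr.
  by rewrite /scaled_cost -[b%:R]/(b%:Z%:~R) ltr_int -lezD1 -addn1 PoszD.
by rewrite -[ltLHS]addr0 ltr_leD.
Qed.

Lemma least_index_le (P : nat -> Prop) k :
  P k -> exists m, [/\ P m, forall i, (i < m)%N -> ~ P i & (m <= k)%N].
Proof.
move=> Pk; have P_ex : exists i, `[< P i >] by exists k; apply/asboolP.
case: (ex_minnP P_ex) => m /asboolP Pm min_m.
exists m; split=> // [i lt_im /asboolP Pi|]; last exact/min_m/asboolP.
by rewrite ltnNge min_m in lt_im.
Qed.

Section MinimalPrefix.
Variables (K : realType) (V : finType) (E : {set V * V}) (c r : V * V -> K).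
Variables (s t : V) (Rb : K) (es : seq (V * V)) (jstar : nat).
Hypotheses (neq_st : s != t) (es_E : perm_eq es (enum E)).
Hypothesis sorted_es : sorted (fun e f => c e <= c f) es.
Hypothesis feasible_jstar :
  exists p, feasible E r s t Rb p /\ p \subset [set e | e \in take jstar es].
Hypothesis infeasible_lt_jstar : forall j, (j < jstar)%N ->
  ~ exists p, feasible E r s t Rb p /\ p \subset [set e | e \in take j es].

Let L := c (nth (s, s) es jstar.-1).

Let le_c_trans : transitive (fun e f => c e <= c f).
Proof. by move=> e' e f /= /le_trans; apply. Qed.

Let le_c_refl : reflexive (fun e f => c e <= c f).
Proof. by move=> e /=. Qed.

Lemma jstar_gt0 : (0 < jstar)%N.
Proof.
have [p [[p_path _] p_sub]] := feasible_jstar.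
case/set0Pn: (edge_path_neq0 neq_st p_path) => e e_p.
by move/subsetP/(_ e e_p): p_sub; rewrite inE; case: posnP => // ->; rewrite take0.
Qed.

Lemma jstar_le_size : (jstar <= size es)%N.
Proof.
rewrite leqNgt; apply/negP => size_lt; apply: (infeasible_lt_jstar size_lt).
by rewrite take_size -(take_oversize (ltnW size_lt)).
Qed.

Lemma le_prefix_cost e : e \in take jstar es -> c e <= L.
Proof.
rewrite -{1}(prednK jstar_gt0).
apply: (sorted_le_nth_take (leT := fun e f => c e <= c f)) => //.
by rewrite prednK ?jstar_gt0 ?jstar_le_size.
Qed.

Lemma feasible_has_costly_edge p :
  feasible E r s t Rb p -> exists2 e, e \in p & L <= c e.
Proof.
move=> Fp; case: (boolP [exists e in p, L <= c e]) => [/exists_inP[e]|none].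
  by exists e.
exfalso; apply: (infeasible_lt_jstar (j := jstar.-1)).
  by rewrite ltn_predL jstar_gt0.
exists p; split => //; apply/subsetP => e e_p; rewrite inE; apply: contraT => e_notin.
have e_es : e \in es.
  by rewrite (perm_mem es_E) mem_enum; move/subsetP: (edge_path_sub Fp.1); apply.
rewrite -(negbTE none); apply/exists_inP; exists e => //.
apply: (sorted_nth_le_notin_take (leT := fun e f => c e <= c f)) => //.
by rewrite prednK ?jstar_gt0 ?jstar_le_size.
Qed.

Lemma prefix_cost_gt0 : 0 < Copt E c r s t Rb -> 0 < L.
Proof.
move=> Copt_gt0; rewrite ltNge; apply/negP => L_le0.
have [p [Fp p_sub]] := feasible_jstar.
suff : Copt E c r s t Rb <= 0 by rewrite leNgt Copt_gt0.
apply: le_trans (Copt_le_pcost _ Fp) _; apply: sumr_le0 => e e_p.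
apply: le_trans L_le0; apply: le_prefix_cost.
by move/subsetP/(_ e e_p): p_sub; rewrite inE.
Qed.

End MinimalPrefix.

Theorem lemma10 (K : realType) (V : finType) (E : {set V * V})
  (c r : V * V -> K) (s t : V) (Rb : K)
  (es : seq (V * V)) (jstar : nat) (b : nat) :
  weakly_connected E ->
  (forall e, e \in E -> 0 <= c e) ->
  (forall e, e \in E -> 0 <= r e) ->
  s != t -> 0 <= Rb ->
  (exists p, feasible E r s t Rb p) ->
  0 < Copt E c r s t Rb ->
  (* e_1, ..., e_m : the edges sorted ascending by cost *)
  perm_eq es (enum E) ->
  sorted (fun e f => c e <= c f) es ->
  (* j* : smallest j such that a feasible path uses only e_1, ..., e_j *)
  (exists p, feasible E r s t Rb p /\ p \subset [set e | e \in take jstar es]) ->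
  (forall j, (j < jstar)%N ->
     ~ exists p, feasible E r s t Rb p /\ p \subset [set e | e \in take j es]) ->
  (0 < b)%N -> (b <= #|V|)%N ->
  let n := #|V| in
  let L := c (nth (s, s) es jstar.-1) in   (* L = c(e_{j*}) *)
  let U := n%:R * L in
  let S (i : nat) := U / (2 * n%:R) / 2 ^+ i in
  exists istar : nat,
    [/\ b%:R < Copt E (scaled_cost c (S istar)) r s t Rb,
        (forall i, (i < istar)%N -> ~ (b%:R < Copt E (scaled_cost c (S i)) r s t Rb))
      & (istar <= up_log 2 n)%N].
Proof.
move=> _ c_ge0 _ neq_st _ feasible_ex Copt_gt0 es_E sorted_es feasible_jstar
  infeasible_lt_jstar _ b_le_n n L U S.
apply: least_index_le; set k := up_log 2 n.
have L_gt0 : 0 < L :=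
  prefix_cost_gt0 neq_st sorted_es feasible_jstar infeasible_lt_jstar Copt_gt0.
have n_gt0 : (0 < n)%N by apply/card_gt0P; exists s.
have S_kE : S k = L / (2 * 2 ^+ k).
  by rewrite /S /U; field; rewrite ?mulf_neq0 ?expf_neq0 ?pnatr_eq0 -?lt0n.
have S_k_gt0 : 0 < S k by rewrite S_kE divr_gt0 ?mulr_gt0 ?exprn_gt0.
have scaled_b_le_L : b.+1%:R * S k <= L.
  rewrite S_kE mulrA ler_pdivrMr ?mulr_gt0 ?exprn_gt0 // mulrC ler_pM2l //.
  rewrite -(natrX K 2 k) -natrM ler_nat mul2n -addnn -addn1.
  exact: leq_add (leq_trans b_le_n (up_logP n (ltnSn 1))) (expn_gt0 2 k).
apply: lt_Copt => // p Fp.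
have [e e_p L_le_ce] := feasible_has_costly_edge neq_st es_E sorted_es
  feasible_jstar infeasible_lt_jstar Fp.
apply: (lt_pcost_scaled S_k_gt0 _ e_p (le_trans scaled_b_le_L L_le_ce)) => f f_p.
by apply: c_ge0; move/subsetP: (edge_path_sub Fp.1); apply.
Qed.
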